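(* Let $H=(v_1,\dots,v_6)$ be an embedded equilateral hexagon, considered up to translations and rotations, whose action-angle coordinates $(d_1,d_2,d_3,\theta_1,\theta_2,\theta_3)$ for the $T_{135}$ triangulation are defined. If the Joint Chirality-Curl satisfies $J(H)=(1,1)$ or $J(H)=(-1,1)$, then $\theta_i\in(0,\pi)$ for $i=1,2,3$.
   Context: An equilateral hexagon is an ordered 6-tuple $H=(v_1,\dots,v_6)$ in $\mathbb{R}^3$ with $\|v_i-v_{i+1}\|=1$ (indices mod 6), edges $e_i=[v_i,v_{i+1}]$, oriented $v_1\to v_2\to\cdots\to v_6\to v_1$; embedded means non-adjacent edges are disjoint and adjacent ones meet only at their common endpoint. Standard position: $v_1=0$, $v_3$ on the positive $x$-axis, $v_5$ in the $xy$-plane with positive $y$-coordinate. Action-angle coordinates ($T_{135}$ triangulation), defined when $v_1,v_3,v_5$ are not collinear and $0<d_i<2$: $d_1=\|v_3-v_1\|$, $d_2=\|v_5-v_3\|$, $d_3=\|v_1-v_5\|$; with $m_1,m_2,m_3$ the midpoints of $[v_1,v_3],[v_3,v_5],[v_5,v_1]$, $u_1,u_2,u_3$ the unit vectors in the $xy$-plane perpendicular to these segments pointing toward the opposite vertex of triangle $v_1v_3v_5$ (toward $v_5,v_1,v_3$ respectively), and $e_z=(0,0,1)$, the angles $\theta_i\in[0,2\pi)$ are determined by $v_{2i}=m_i+\tfrac12\sqrt{4-d_i^2}(\cos\theta_i\,u_i+\sin\theta_i\,e_z)$ (regular planar hexagon: all $\theta_i=\pi$). Joint Chirality-Curl: $curl(H)=\operatorname{sign}\big((v_3-v_1)\times(v_5-v_1)\cdot(v_2-v_1)\big)$.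 For $i=2,4,6$, $T_i$ is the open triangular disk with vertices $v_{i-1},v_i,v_{i+1}$, oriented by the right-hand rule (normal $(v_i-v_{i-1})\times(v_{i+1}-v_i)$), and $\Delta_i$ is the algebraic intersection number of $T_i$ with the oriented polygon $H$. Then $J(H)=(\Delta_2\Delta_4\Delta_6,\ \Delta_2^2\Delta_4^2\Delta_6^2\,curl(H))$. (By Calvo, $J(H)=(1,c)$ iff $H$ is a right-handed trefoil with curl $c$, $(-1,c)$ iff left-handed trefoil with curl $c$, $(0,0)$ iff unknot.) *)

From Stdlib Require Import Reals Lra ClassicalEpsilon.
Open Scope R_scope.

Record pt := Pt { px : R; py : R; pz : R }.

Definition origin : pt := Pt 0 0 0.
Definition ez : pt := Pt 0 0 1.
Definition padd (p q : pt) : pt := Pt (px p + px q) (py p + py q) (pz p + pz q).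
Definition psub (p q : pt) : pt := Pt (px p - px q) (py p - py q) (pz p - pz q).
Definition pscal (a : R) (p : pt) : pt := Pt (a * px p) (a * py p) (a * pz p).
Definition dot (p q : pt) : R := px p * px q + py p * py q + pz p * pz q.
Definition cross (p q : pt) : pt :=
  Pt (py p * pz q - pz p * py q) (pz p * px q - px p * pz q) (px p * py q - py p * px q).
Definition norm (p : pt) : R := sqrt (dot p p).
Definition dist (p q : pt) : R := norm (psub p q).
Definition midpoint (p q : pt) : pt := pscal (/ 2) (padd p q).

Definition Rsgn (x : R) : R :=
  if Rlt_dec 0 x then 1 else if Rlt_dec x 0 then -1 else 0.

Definition on_segment (p q x : pt) : Prop :=
  exists t, 0 <= t <= 1 /\ x = padd p (pscal t (psub q p)).

(** Hexagons: ordered 6-tuples of points; indices taken mod 6 (v_0 = v_6, v_7 = v_1) *)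
Record hexagon := Hex { v1 : pt; v2 : pt; v3 : pt; v4 : pt; v5 : pt; v6 : pt }.

Definition vtx (H : hexagon) (i : nat) : pt :=
  match (i mod 6)%nat with
  | 1%nat => v1 H | 2%nat => v2 H | 3%nat => v3 H
  | 4%nat => v4 H | 5%nat => v5 H | _ => v6 H
  end.

Definition on_edge (H : hexagon) (i : nat) (x : pt) : Prop :=
  on_segment (vtx H i) (vtx H (S i)) x.

Definition equilateral (H : hexagon) : Prop :=
  forall i : nat, (1 <= i <= 6)%nat -> dist (vtx H i) (vtx H (S i)) = 1.

Definition embedded (H : hexagon) : Prop :=
  forall (i j : nat) (x : pt), (1 <= i <= 6)%nat -> (1 <= j <= 6)%nat -> i <> j ->
    on_edge H i x -> on_edge H j x ->
    ((S i mod 6 = j mod 6)%nat /\ x = vtx H j) \/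
    ((S j mod 6 = i mod 6)%nat /\ x = vtx H i).

Definition standard_position (H : hexagon) : Prop :=
  v1 H = origin /\
  0 < px (v3 H) /\ py (v3 H) = 0 /\ pz (v3 H) = 0 /\
  pz (v5 H) = 0 /\ 0 < py (v5 H).

Definition d1 (H : hexagon) : R := dist (v3 H) (v1 H).
Definition d2 (H : hexagon) : R := dist (v5 H) (v3 H).
Definition d3 (H : hexagon) : R := dist (v1 H) (v5 H).

Definition perp_toward (p q r : pt) : pt :=
  let w := psub q p in
  let n0 := Pt (- py w) (px w) 0 in
  let n := pscal (/ norm n0) n0 in
  if Rlt_dec 0 (dot n (psub r (midpoint p q))) then n else pscal (-1) n.

(** theta is the angle coordinate of the vertex x lying over the diagonal [p,q]
    of triangle p q r (r the opposite vertex):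
    x = m + 1/2 sqrt(4 - d^2) (cos theta u + sin theta e_z), theta in [0, 2 pi) *)
Definition is_angle_coord (p q r x : pt) (theta : R) : Prop :=
  0 <= theta < 2 * PI /\
  x = padd (midpoint p q)
        (pscal (/ 2 * sqrt (4 - (dist q p) ^ 2))
           (padd (pscal (cos theta) (perp_toward p q r)) (pscal (sin theta) ez))).

Definition action_angle_defined (H : hexagon) : Prop :=
  0 < d1 H < 2 /\ 0 < d2 H < 2 /\ 0 < d3 H < 2.

Definition curl (H : hexagon) : R :=
  Rsgn (dot (cross (psub (v3 H) (v1 H)) (psub (v5 H) (v1 H))) (psub (v2 H) (v1 H))).

Definition in_open_triangle (a b c x : pt) : Prop :=
  exists s r, 0 < s /\ 0 < r /\ s + r < 1 /\
    x = padd a (padd (pscal s (psub b a)) (pscal r (psub c a))).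

(** signed contribution of the oriented segment [p,q] to the algebraic intersection
    number with the open triangle (a,b,c), oriented by n = (b-a) x (c-b).
    A segment passing from the negative to the positive side of the plane through the
    open disk counts +1, the reverse -1; a segment with one endpoint on the plane (a
    vertex of the polygon in the disk) counts 1/2 of that, so that a vertex where the
    polygon pierces the disk counts +-1 in total and a vertex where it only touches
    counts 0. *)
Definition seg_contrib (a b c p q : pt) : R :=
  let n := cross (psub b a) (psub c b) in
  let h0 := dot n (psub p a) in
  let h1 := dot n (psub q a) in
  if Req_EM_T (Rsgn h0) (Rsgn h1) then 0 else
  let X := padd p (pscal (h0 / (h0 - h1)) (psub q p)) in
  if excluded_middle_informative (in_open_triangle a b c X)
  then (Rsgn h1 - Rsgn h0) / 2 else 0.

(** Delta_i : algebraic intersection number of T_i = (v_{i-1}, v_i, v_{i+1})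
    with the oriented polygon H (sum over the six edges) *)
Definition Delta (H : hexagon) (i : nat) : R :=
  let a := vtx H (i + 5) in
  let b := vtx H i in
  let c := vtx H (S i) in
  seg_contrib a b c (vtx H 1) (vtx H 2) + seg_contrib a b c (vtx H 2) (vtx H 3) +
  seg_contrib a b c (vtx H 3) (vtx H 4) + seg_contrib a b c (vtx H 4) (vtx H 5) +
  seg_contrib a b c (vtx H 5) (vtx H 6) + seg_contrib a b c (vtx H 6) (vtx H 7).

Definition J (H : hexagon) : R * R :=
  (Delta H 2 * Delta H 4 * Delta H 6,
   (Delta H 2) ^ 2 * (Delta H 4) ^ 2 * (Delta H 6) ^ 2 * curl H).

From Stdlib Require Import Reals Lra Psatz Lia ClassicalEpsilon.
Open Scope R_scope.

(* In standard position v1, v3, v5 span the plane z = 0, and theta_i lies in (0, pi)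
   exactly when v_(2i) is strictly above that plane; curl 1 puts v2 above it.  If v4 or
   v6 were not strictly above, one of the triangles T2, T4, T6 would either have its apex
   strictly on one side of z = 0 and the rest of the polygon weakly on the other, so that
   the polygon never meets its open disk, or would lie flat in z = 0, the polygon meeting
   it only along its boundary and at v1, where it touches without crossing.  Either way
   that Delta_i vanishes, contradicting J(H) = (+-1, 1). *)

Definition tri_normal (a b c : pt) : pt := cross (psub b a) (psub c b).
Definition tri_height (a b c x : pt) : R := dot (tri_normal a b c) (psub x a).
Definition seg_point (p q : pt) (t : R) : pt := padd p (pscal t (psub q p)).

Lemma Rsgn_0 : Rsgn 0 = 0.
Proof. unfold Rsgn; destruct (Rlt_dec 0 0); [lra|]; destruct (Rlt_dec 0 0); lra. Qed.

Lemma Rsgn_eq1 x : Rsgn x = 1 -> 0 < x.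
Proof. unfold Rsgn; destruct (Rlt_dec 0 x); auto; destruct (Rlt_dec x 0); lra. Qed.

Lemma Rsgn_neq x y : Rsgn x <> Rsgn y -> x <> y /\ (x <= 0 <= y \/ y <= 0 <= x).
Proof.
  unfold Rsgn; intros Hxy.
  destruct (Rlt_dec 0 x), (Rlt_dec 0 y), (Rlt_dec x 0), (Rlt_dec y 0);
    solve [exfalso; apply Hxy; reflexivity | lra].
Qed.

Lemma Rsgn_mul_pos k x y : 0 < x -> 0 < y -> Rsgn (k * x) = Rsgn (k * y).
Proof.
  intros. unfold Rsgn.
  destruct (Rlt_dec 0 (k * x)), (Rlt_dec 0 (k * y)), (Rlt_dec (k * x) 0), (Rlt_dec (k * y) 0);
    solve [reflexivity | exfalso; nra].
Qed.

Lemma seg_point_0 p q : seg_point p q 0 = p.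
Proof. destruct p, q; unfold seg_point, padd, pscal, psub; simpl; f_equal; ring. Qed.

Lemma seg_point_1 p q : seg_point p q 1 = q.
Proof. destruct p, q; unfold seg_point, padd, pscal, psub; simpl; f_equal; ring. Qed.

Lemma tri_height_a a b c : tri_height a b c a = 0.
Proof. unfold tri_height, tri_normal, dot, cross, psub; simpl; ring. Qed.

Lemma tri_height_b a b c : tri_height a b c b = 0.
Proof. unfold tri_height, tri_normal, dot, cross, psub; simpl; ring. Qed.

Lemma tri_height_c a b c : tri_height a b c c = 0.
Proof. unfold tri_height, tri_normal, dot, cross, psub; simpl; ring. Qed.

Lemma tri_height_flat a b c x : pz a = 0 -> pz b = 0 -> pz c = 0 ->
  tri_height a b c x = pz (tri_normal a b c) * pz x.
Proof.
  intros Ha Hb Hc. unfold tri_height, tri_normal, dot, cross, psub; simpl.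
  rewrite Ha, Hb, Hc; ring.
Qed.

Lemma seg_contrib_crossing {a b c p q : pt} : seg_contrib a b c p q <> 0 ->
  Rsgn (tri_height a b c p) <> Rsgn (tri_height a b c q) /\
  exists t, 0 <= t <= 1 /\
    (tri_height a b c p = 0 -> t = 0) /\ (tri_height a b c q = 0 -> t = 1) /\
    in_open_triangle a b c (seg_point p q t).
Proof.
  unfold seg_contrib; cbv zeta.
  fold (tri_normal a b c) (tri_height a b c p) (tri_height a b c q).
  set (h0 := tri_height a b c p); set (h1 := tri_height a b c q).
  destruct (Req_EM_T (Rsgn h0) (Rsgn h1)) as [|Hsgn]; [lra|].
  destruct (excluded_middle_informative _) as [Hin|]; [intros _|lra].
  split; [exact Hsgn|].
  destruct (Rsgn_neq _ _ Hsgn) as [Hne Hstraddle].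
  exists (h0 / (h0 - h1)).
  assert (Ht : h0 / (h0 - h1) * (h0 - h1) = h0) by (field; lra).
  repeat split; [nra | nra | intros E; rewrite E in *; field; lra
                | intros E; rewrite E in *; field; lra | exact Hin].
Qed.

Lemma seg_contrib_same_side a b c p q :
  Rsgn (tri_height a b c p) = Rsgn (tri_height a b c q) -> seg_contrib a b c p q = 0.
Proof.
  intros Hsgn. destruct (Req_dec (seg_contrib a b c p q) 0) as [|Hne]; [assumption|].
  exfalso; apply (seg_contrib_crossing Hne), Hsgn.
Qed.

Lemma seg_contrib_in_plane a b c p q :
  tri_height a b c p = 0 -> tri_height a b c q = 0 -> seg_contrib a b c p q = 0.
Proof. intros Hp Hq. apply seg_contrib_same_side. rewrite Hp, Hq; reflexivity. Qed.

Lemma seg_contrib_separated a b c p q : pz a = 0 -> pz c = 0 -> pz b <> 0 ->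
  pz b * pz p <= 0 -> pz b * pz q <= 0 -> seg_contrib a b c p q = 0.
Proof.
  intros Ha Hc Hb Hp Hq.
  destruct (Req_dec (seg_contrib a b c p q) 0) as [|Hne]; [assumption|exfalso].
  destruct (seg_contrib_crossing Hne) as (_ & t & Ht & _ & _ & s & r & Hs & Hr & _ & HX).
  apply (f_equal pz) in HX. unfold seg_point in HX; simpl in HX. rewrite Ha, Hc in HX.
  assert (0 < s * (pz b * pz b)) by (apply Rmult_lt_0_compat; nra).
  nra.
Qed.

Lemma seg_contrib_from_vertex a b c p q : tri_height a b c p = 0 ->
  ~ in_open_triangle a b c p -> seg_contrib a b c p q = 0.
Proof.
  intros Hp Hout. destruct (Req_dec (seg_contrib a b c p q) 0) as [|Hne]; [assumption|].
  destruct (seg_contrib_crossing Hne) as (_ & t & _ & Ht0 & _ & Hin).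
  rewrite (Ht0 Hp), seg_point_0 in Hin. contradiction.
Qed.

Lemma seg_contrib_to_vertex a b c p q : tri_height a b c q = 0 ->
  ~ in_open_triangle a b c q -> seg_contrib a b c p q = 0.
Proof.
  intros Hq Hout. destruct (Req_dec (seg_contrib a b c p q) 0) as [|Hne]; [assumption|].
  destruct (seg_contrib_crossing Hne) as (_ & t & _ & _ & Ht1 & Hin).
  rewrite (Ht1 Hq), seg_point_1 in Hin. contradiction.
Qed.

Lemma seg_contrib_touch a b c p x q : tri_height a b c x = 0 ->
  Rsgn (tri_height a b c p) = Rsgn (tri_height a b c q) ->
  seg_contrib a b c p x + seg_contrib a b c x q = 0.
Proof.
  intros Hx Hsgn. unfold seg_contrib; cbv zeta.
  fold (tri_normal a b c) (tri_height a b c p) (tri_height a b c x) (tri_height a b c q).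
  rewrite Hx, Rsgn_0 in *.
  set (hp := tri_height a b c p) in *; set (hq := tri_height a b c q) in *.
  destruct (Req_EM_T (Rsgn hp) 0) as [E1|E1], (Req_EM_T 0 (Rsgn hq)) as [E2|E2]; try lra.
  assert (hp <> 0) by (intro Z; rewrite Z, Rsgn_0 in E1; lra).
  fold (seg_point p x (hp / (hp - 0))) (seg_point x q (0 / (0 - hq))).
  replace (hp / (hp - 0)) with 1 by (field; lra).
  replace (0 / (0 - hq)) with 0 by (unfold Rdiv; ring).
  rewrite seg_point_0, seg_point_1.
  destruct (excluded_middle_informative _); lra.
Qed.

Lemma tri_normal_cross a b c : tri_normal a b c = cross (psub b a) (psub c a).
Proof. unfold tri_normal, cross, psub; simpl; f_equal; ring. Qed.

Lemma cross_dependent l m u v : l <> 0 ->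
  padd (pscal l u) (pscal m v) = origin -> cross u v = origin.
Proof.
  destruct u as [ux uy uz], v as [vx vy vz]; unfold padd, pscal, cross, origin; simpl.
  intros Hl E; injection E as Ex Ey Ez.
  f_equal; apply (Rmult_eq_reg_l l); try exact Hl.
  - transitivity ((l * uy + m * vy) * vz - (l * uz + m * vz) * vy); [ring|rewrite Ey, Ez; ring].
  - transitivity ((l * uz + m * vz) * vx - (l * ux + m * vx) * vz); [ring|rewrite Ex, Ez; ring].
  - transitivity ((l * ux + m * vx) * vy - (l * uy + m * vy) * vx); [ring|rewrite Ex, Ey; ring].
Qed.

Lemma open_triangle_not_vertex {a b c : pt} : tri_normal a b c <> origin ->
  ~ in_open_triangle a b c a /\ ~ in_open_triangle a b c c.
Proof.
  rewrite tri_normal_cross. intros Hn.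
  split; intros (s & r & Hs & Hr & Hsr & E); apply Hn.
  - apply (cross_dependent s r); [lra|].
    destruct a, b, c; unfold padd, pscal, psub, origin in *; simpl in *.
    injection E as Ex Ey Ez; f_equal; lra.
  - apply (cross_dependent s (r - 1)); [lra|].
    destruct a, b, c; unfold padd, pscal, psub, origin in *; simpl in *.
    injection E as Ex Ey Ez; f_equal; lra.
Qed.

Lemma dist_sqr p q : dist p q ^ 2 = dot (psub p q) (psub p q).
Proof.
  unfold dist, norm. apply pow2_sqrt.
  unfold dot; nra.
Qed.

Lemma lagrange_identity u w :
  dot (cross u w) (cross u w) = dot u u * dot w w - dot u w ^ 2.
Proof. unfold dot, cross; simpl; ring. Qed.

Lemma tri_normal_nonzero a b c :
  dist a b = 1 -> dist b c = 1 -> 0 < dist c a < 2 -> tri_normal a b c <> origin.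
Proof.
  intros Hab Hbc Hca Hn.
  set (u := psub b a); set (w := psub c b).
  assert (Hu : dot u u = 1).
  { assert (E : dist a b ^ 2 = 1) by (rewrite Hab; ring).
    rewrite dist_sqr in E. rewrite <- E; unfold u, dot, psub; simpl; ring. }
  assert (Hw : dot w w = 1).
  { assert (E : dist b c ^ 2 = 1) by (rewrite Hbc; ring).
    rewrite dist_sqr in E. rewrite <- E; unfold w, dot, psub; simpl; ring. }
  assert (Hv : dist c a ^ 2 = 2 + 2 * dot u w).
  { rewrite dist_sqr. transitivity (dot u u + 2 * dot u w + dot w w); [|lra].
    unfold u, w, dot, psub; simpl; ring. }
  assert (Huw : dot u w ^ 2 = 1).
  { pose proof (lagrange_identity u w) as L.
    change (cross u w) with (tri_normal a b c) in L.
    rewrite Hn, Hu, Hw in L.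
    replace (dot origin origin) with 0 in L by (unfold dot; simpl; ring).
    lra. }
  assert (0 < dist c a ^ 2 < 4) by nra.
  assert (0 < (1 - dot u w) * (1 + dot u w)) by (apply Rmult_lt_0_compat; lra).
  nra.
Qed.

Definition hex_rot (H : hexagon) : hexagon := Hex (v3 H) (v4 H) (v5 H) (v6 H) (v1 H) (v2 H).

Lemma vtx_hex_rot H i : vtx (hex_rot H) i = vtx H (i + 2).
Proof.
  unfold vtx. rewrite Nat.Div0.add_mod.
  assert (Hi : (i mod 6 < 6)%nat) by (apply Nat.mod_upper_bound; lia).
  destruct (i mod 6) as [|[|[|[|[|[|k]]]]]]; try reflexivity; lia.
Qed.

Lemma Delta_hex_rot H i : Delta (hex_rot H) i = Delta H (i + 2).
Proof.
  unfold Delta. rewrite !vtx_hex_rot.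
  replace (i + 5 + 2)%nat with (i + 2 + 5)%nat by lia.
  replace (S i + 2)%nat with (S (i + 2)) by lia.
  set (a := vtx H (i + 2 + 5)); set (b := vtx H (i + 2)); set (c := vtx H (S (i + 2))).
  unfold vtx; simpl. ring.
Qed.

Lemma Delta4_eq H : let T := seg_contrib (v3 H) (v4 H) (v5 H) in
  Delta H 4 = T (v1 H) (v2 H) + T (v2 H) (v3 H) + T (v3 H) (v4 H) +
              T (v4 H) (v5 H) + T (v5 H) (v6 H) + T (v6 H) (v1 H).
Proof. reflexivity. Qed.

Section HorizontalDiagonalTriangle.

Variable H : hexagon.
Hypotheses (Hz1 : pz (v1 H) = 0) (Hz3 : pz (v3 H) = 0) (Hz5 : pz (v5 H) = 0).

Lemma Delta4_separated : pz (v4 H) <> 0 ->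
  pz (v4 H) * pz (v2 H) <= 0 -> pz (v4 H) * pz (v6 H) <= 0 -> Delta H 4 = 0.
Proof.
  intros Hz4 H2 H6. rewrite Delta4_eq.
  rewrite (seg_contrib_in_plane _ _ _ (v3 H) (v4 H)) by apply tri_height_a || apply tri_height_b.
  rewrite (seg_contrib_in_plane _ _ _ (v4 H) (v5 H)) by apply tri_height_b || apply tri_height_c.
  rewrite !seg_contrib_separated by (auto; rewrite ?Hz1, ?Hz3, ?Hz5; lra).
  ring.
Qed.

Lemma Delta4_flat : pz (v4 H) = 0 -> 0 < pz (v2 H) -> 0 < pz (v6 H) ->
  tri_normal (v3 H) (v4 H) (v5 H) <> origin -> Delta H 4 = 0.
Proof.
  intros Hz4 Hz2 Hz6 Hn. rewrite Delta4_eq.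
  destruct (open_triangle_not_vertex Hn) as [Hout3 Hout5].
  assert (Htouch : seg_contrib (v3 H) (v4 H) (v5 H) (v6 H) (v1 H) +
                   seg_contrib (v3 H) (v4 H) (v5 H) (v1 H) (v2 H) = 0).
  { apply seg_contrib_touch; rewrite !tri_height_flat by assumption.
    - rewrite Hz1; ring.
    - apply Rsgn_mul_pos; assumption. }
  rewrite (seg_contrib_to_vertex _ _ _ (v2 H) (v3 H)) by (apply tri_height_a || exact Hout3).
  rewrite (seg_contrib_from_vertex _ _ _ (v5 H) (v6 H)) by (apply tri_height_c || exact Hout5).
  rewrite (seg_contrib_in_plane _ _ _ (v3 H) (v4 H)) by apply tri_height_a || apply tri_height_b.
  rewrite (seg_contrib_in_plane _ _ _ (v4 H) (v5 H)) by apply tri_height_b || apply tri_height_c.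
  lra.
Qed.

Lemma Delta4_apex_below : pz (v4 H) <= 0 -> 0 < pz (v2 H) -> 0 < pz (v6 H) ->
  dist (v3 H) (v4 H) = 1 -> dist (v4 H) (v5 H) = 1 -> 0 < dist (v5 H) (v3 H) < 2 ->
  Delta H 4 = 0.
Proof.
  intros Hz4 Hz2 Hz6 L34 L45 L53.
  destruct (Rle_lt_or_eq_dec _ _ Hz4) as [Hlt | Heq].
  - apply Delta4_separated; nra.
  - apply Delta4_flat; auto. apply tri_normal_nonzero; assumption.
Qed.

End HorizontalDiagonalTriangle.

Lemma even_vertices_above {H : hexagon} : equilateral H -> action_angle_defined H ->
  pz (v1 H) = 0 -> pz (v3 H) = 0 -> pz (v5 H) = 0 -> 0 < pz (v2 H) ->
  Delta H 2 <> 0 -> Delta H 4 <> 0 -> Delta H 6 <> 0 ->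
  0 < pz (v4 H) /\ 0 < pz (v6 H).
Proof.
  intros Heq (_ & Hd2 & Hd3) Hz1 Hz3 Hz5 Hz2 N2 N4 N6.
  destruct (Rle_lt_dec (pz (v4 H)) 0) as [Hz4|Hz4], (Rle_lt_dec (pz (v6 H)) 0) as [Hz6|Hz6].
  - exfalso; apply N2.
    (* [vtx] reads indices mod 6, so [Delta H 8] computes to [Delta H 2]. *)
    change (Delta H 2) with (Delta H (4 + 2 + 2)). rewrite <- !Delta_hex_rot.
    apply Delta4_separated; simpl; nra.
  - exfalso; apply N4.
    apply Delta4_apex_below; try assumption;
      [exact (Heq 3%nat ltac:(lia)) | exact (Heq 4%nat ltac:(lia))].
  - exfalso; apply N6.
    change (Delta H 6) with (Delta H (4 + 2)). rewrite <- Delta_hex_rot.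
    apply Delta4_apex_below; simpl; try assumption;
      [exact (Heq 5%nat ltac:(lia)) | exact (Heq 6%nat ltac:(lia))].
  - split; assumption.
Qed.

Lemma J_trefoil_curl1 {H : hexagon} : J H = (1, 1) \/ J H = (-1, 1) ->
  curl H = 1 /\ Delta H 2 <> 0 /\ Delta H 4 <> 0 /\ Delta H 6 <> 0.
Proof.
  unfold J. set (P := Delta H 2 * Delta H 4 * Delta H 6). intros HJ.
  assert (HP : P ^ 2 = 1 /\ P ^ 2 * curl H = 1).
  { destruct HJ as [E | E]; injection E as E1 E2; split;
      solve [rewrite E1; ring | rewrite <- E2; unfold P; ring]. }
  destruct HP as [HP Hc]. rewrite HP, Rmult_1_l in Hc.
  unfold P in HP. repeat split; [exact Hc | intros Z; rewrite Z in HP; lra ..].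
Qed.

Lemma curl1_v2_above {H : hexagon} : standard_position H -> curl H = 1 -> 0 < pz (v2 H).
Proof.
  intros (E1 & Hx3 & Hy3 & Hz3 & Hz5 & Hy5) Hc.
  apply Rsgn_eq1 in Hc. unfold dot, cross, psub in Hc; simpl in Hc.
  rewrite E1, Hy3, Hz3, Hz5 in Hc; simpl in Hc.
  assert (0 < px (v3 H) * py (v5 H)) by nra.
  nra.
Qed.

Lemma sin_pos_angle th : 0 <= th < 2 * PI -> 0 < sin th -> 0 < th < PI.
Proof.
  intros Hth Hs. split.
  - destruct (Req_dec th 0) as [E|]; [rewrite E, sin_0 in Hs; lra | lra].
  - destruct (Rtotal_order th PI) as [|[E|Hgt]]; [assumption | |].
    + rewrite E, sin_PI in Hs; lra.
    + pose proof (sin_lt_0 th Hgt (proj2 Hth)); lra.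
Qed.

Lemma angle_coord_above {p q r x : pt} {th : R} : is_angle_coord p q r x th ->
  pz p = 0 -> pz q = 0 -> 0 < dist q p < 2 -> 0 < pz x -> 0 < th < PI.
Proof.
  intros [Hth Hx] Hp Hq Hd Hz. apply sin_pos_angle; [exact Hth|].
  assert (Hperp : pz (perp_toward p q r) = 0)
    by (unfold perp_toward; cbv zeta; destruct (Rlt_dec _ _); simpl; ring).
  rewrite Hx in Hz; cbn [pz padd pscal midpoint ez] in Hz. rewrite Hperp, Hp, Hq in Hz.
  assert (0 < sqrt (4 - dist q p ^ 2)) by (apply sqrt_lt_R0; nra).
  nra.
Qed.

Theorem mainTheorem2 (H : hexagon) (theta1 theta2 theta3 : R) :
  equilateral H -> embedded H -> standard_position H ->
  action_angle_defined H ->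
  is_angle_coord (v1 H) (v3 H) (v5 H) (v2 H) theta1 ->
  is_angle_coord (v3 H) (v5 H) (v1 H) (v4 H) theta2 ->
  is_angle_coord (v5 H) (v1 H) (v3 H) (v6 H) theta3 ->
  (J H = (1, 1) \/ J H = (-1, 1)) ->
  (0 < theta1 < PI) /\ (0 < theta2 < PI) /\ (0 < theta3 < PI).
Proof.
  intros Heq _ Hstd Had Ht1 Ht2 Ht3 HJ.
  destruct (J_trefoil_curl1 HJ) as (Hcurl & N2 & N4 & N6).
  pose proof (curl1_v2_above Hstd Hcurl) as Hz2.
  destruct Hstd as (E1 & _ & _ & Hz3 & Hz5 & _).
  assert (Hz1 : pz (v1 H) = 0) by (rewrite E1; reflexivity).
  destruct (even_vertices_above Heq Had Hz1 Hz3 Hz5 Hz2 N2 N4 N6) as [Hz4 Hz6].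
  destruct Had as (Hd1 & Hd2 & Hd3).
  split; [|split].
  - exact (angle_coord_above Ht1 Hz1 Hz3 Hd1 Hz2).
  - exact (angle_coord_above Ht2 Hz3 Hz5 Hd2 Hz4).
  - exact (angle_coord_above Ht3 Hz5 Hz1 Hd3 Hz6).
Qed.
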